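(* Let $\mathcal{E}=\{e_1,\dots,e_n\}$ be an orthonormal basis for $\mathbb{R}^n$ and let $M$ be a $k$-dimensional maximal $\mathcal{E}$-PR subspace with $k<[(n+1)/2]$. Then $k=\min\{|\mathrm{supp}(x)|:0\neq x\in M\}$.
   Context: $[a]$ is the integer part of $a$. For $x=\sum_{i=1}^n\alpha_ie_i$, $\mathrm{supp}(x)=\{i:\alpha_i\neq0\}$. A subspace $M$ is an $\mathcal{E}$-PR subspace if $\{P_Me_i\}_{i=1}^n$ (with $P_M$ the orthogonal projection onto $M$) spans $M$ and whenever $x,y\in M$ satisfy $|\langle x,P_Me_i\rangle|=|\langle y,P_Me_i\rangle|$ for all $i$, then $x=\pm y$. It is maximal if it is not a proper subspace of another $\mathcal{E}$-PR subspace. *)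

From HB Require Import structures.
From mathcomp Require Import all_boot all_order all_algebra.
From mathcomp Require Import reals.
Set Implicit Arguments. Unset Strict Implicit. Unset Printing Implicit Defensive.
Import Order.TTheory GRing.Theory Num.Theory.
Local Open Scope ring_scope.

(* Vectors of R^n are row vectors 'rV[R]_n; a subspace of R^n is the row
   space of a matrix A : 'M[R]_n (mxalgebra, scope %MS). *)

Definition dotv (R : realType) (n : nat) (u v : 'rV[R]_n) : R := (u *m v^T) 0 0.

Definition orthonormal_basis (R : realType) (n : nat) (e : 'I_n -> 'rV[R]_n) :=
  forall i j : 'I_n, dotv (e i) (e j) = (i == j)%:R.

(* Matrix of the orthogonal projection onto the row space of A (acting on
   row vectors on the right): with B = row_base A (rows form a basis),
   P = B^T (B B^T)^{-1} B. *)
Definition projmx (R : realType) (n : nat) (A : 'M[R]_n) : 'M[R]_n :=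
  let B := row_base A in (B^T *m invmx (B *m B^T)) *m B.

Definition proj (R : realType) (n : nat) (A : 'M[R]_n) (v : 'rV[R]_n) : 'rV[R]_n :=
  v *m projmx A.

Definition E_PR (R : realType) (n : nat) (e : 'I_n -> 'rV[R]_n) (M : 'M[R]_n) : Prop :=
  (\matrix_(i < n) proj M (e i) == M)%MS /\
  forall x y : 'rV[R]_n, (x <= M)%MS -> (y <= M)%MS ->
    (forall i : 'I_n, `|dotv x (proj M (e i))| = `|dotv y (proj M (e i))|) ->
    x = y \/ x = - y.

Definition maximal_E_PR (R : realType) (n : nat) (e : 'I_n -> 'rV[R]_n) (M : 'M[R]_n) : Prop :=
  E_PR e M /\ forall N : 'M[R]_n, E_PR e N -> ~ (M < N)%MS.

(* supp(x) w.r.t. E: x = sum_i alpha_i e_i with alpha_i = <x, e_i> *)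
Definition supp (R : realType) (n : nat) (e : 'I_n -> 'rV[R]_n) (x : 'rV[R]_n) : {set 'I_n} :=
  [set i | dotv x (e i) != 0].

From HB Require Import structures.
From mathcomp Require Import all_boot all_order all_algebra.
From mathcomp Require Import reals.
From mathcomp Require Import zify lra.
From Stdlib Require Import Classical.

Set Implicit Arguments.
Unset Strict Implicit.
Unset Printing Implicit Defensive.
Import Order.TTheory GRing.Theory Num.Theory.
Local Open Scope ring_scope.

(* Since |<x, P_M e_i>| = |<x, e_i>| for x in M, a subspace M is E-PR iff
   it contains no two nonzero vectors with disjoint supports (apply the
   definition to x + y and x - y).  If 0 <> x in M had |supp x| < k = dim M,
   then M would meet the subspace orthogonal to the e_i, i in supp x,
   nontrivially, producing such a pair; so every support has size >= k.
   If all supports had size > k, pick v outside the finitely many proper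
   subspaces M + span{e_i : i in A} with k + |A| < n.  Then every u in
   M + Rv outside M has |supp u| >= n - k, and as 2k < n, M + Rv would again
   contain no disjointly supported pair: it would be a larger E-PR
   subspace. *)

Section Exchange.
Variables (F : fieldType) (m n : nat).

Lemma addsmx_exchange (M : 'M[F]_(m, n)) (u v : 'rV[F]_n) :
  (u <= M + v)%MS -> ~~ (u <= M)%MS -> (v <= M + u)%MS.
Proof.
move=> uMv uM.
have MuMv : (M + u <= M + v)%MS by rewrite addsmx_sub addsmxSl.
have rk_Mv : (\rank (M + v) <= (\rank M).+1)%N.
  rewrite (leq_trans (mxrank_adds_leqif M v)) //.
  by rewrite -[X in (_ <= X)%N]addn1 leq_add2l rank_leq_row.
have rk_Mu : (\rank M < \rank (M + u))%N.
  have : (M < M + u)%MS.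
    by rewrite ltmxE addsmxSl; apply: contra uM; apply: submx_trans (addsmxSr _ _).
  by rewrite ltmxErank => /andP[].
apply: submx_trans (addsmxSr M v) _.
by rewrite -(geq_leqif (mxrank_leqif_sup MuMv)); apply: leq_trans rk_Mv _.
Qed.

End Exchange.

Section InnerProduct.
Variables (R : realType) (n : nat).
Implicit Types (u v w x y : 'rV[R]_n).

Lemma dotvE u v : dotv u v = \sum_j u 0 j * v 0 j.
Proof. by rewrite /dotv !mxE; apply: eq_bigr => j _; rewrite mxE. Qed.

Lemma dotvC u v : dotv u v = dotv v u.
Proof. by rewrite !dotvE; apply: eq_bigr => j _; rewrite mulrC. Qed.

Lemma dotvDl u v w : dotv (u + v) w = dotv u w + dotv v w.
Proof. by rewrite !dotvE -big_split; apply: eq_bigr => j _; rewrite mxE mulrDl. Qed.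

Lemma dotvZl a u w : dotv (a *: u) w = a * dotv u w.
Proof. by rewrite !dotvE mulr_sumr; apply: eq_bigr => j _; rewrite mxE mulrA. Qed.

Lemma dotvNl u w : dotv (- u) w = - dotv u w.
Proof. by rewrite -scaleN1r dotvZl mulN1r. Qed.

Lemma dotvv_eq0 u : (dotv u u == 0) = (u == 0).
Proof.
apply/eqP/eqP => [uu0|->]; last by rewrite dotvE big1 // => j _; rewrite mxE mul0r.
apply/rowP => j; apply/eqP; rewrite mxE -sqrf_eq0 expr2; apply/eqP.
by move: uu0; rewrite dotvE => /psumr_eq0P; apply=> // i _; rewrite -expr2 sqr_ge0.
Qed.

Lemma dotv_kermx_tr m (X : 'M[R]_(m, n)) u a :
  (u <= X)%MS -> (a <= kermx X^T)%MS -> dotv u a = 0.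
Proof.
move=> /submxP[D ->] /sub_kermxP aX.
by rewrite /dotv -mulmxA -[X *m _]trmxK trmx_mul trmxK aX trmx0 mulmx0 mxE.
Qed.

Lemma eq_oppv_eq0 u : u = - u -> u = 0.
Proof.
move/eqP; rewrite -subr_eq0 opprK -mulr2n -scaler_nat scaler_eq0 pnatr_eq0 /=.
by move/eqP.
Qed.

Lemma row_free_mul_tr_unit r (B : 'M[R]_(r, n)) : row_free B -> B *m B^T \in unitmx.
Proof.
move=> freeB; rewrite -row_free_unit -kermx_eq0; apply/rowV0Pn => -[w].
move=> /sub_kermxP wBBt; apply/negP; rewrite negbK.
have /eqP wB0 : w *m B == 0.
  by rewrite -dotvv_eq0 /dotv trmx_mul mulmxA -(mulmxA w) wBBt mul0mx mxE.
by rewrite -(mul0mx _ B) in wB0; rewrite (row_free_inj freeB wB0).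
Qed.

Lemma projmx_id m (A : 'M[R]_(m, n)) (M : 'M[R]_n) : (A <= M)%MS -> A *m projmx M = A.
Proof.
rewrite -(eq_row_base M) => /submxP[D ->]; rewrite /projmx.
have BBt := row_free_mul_tr_unit (row_base_free M).
set B := row_base M in BBt *.
suff -> : D *m B *m (B^T *m invmx (B *m B^T) *m B) =
    D *m (B *m B^T *m invmx (B *m B^T)) *m B by rewrite mulmxV // mulmx1.
by rewrite !mulmxA.
Qed.

Lemma trmx_projmx (M : 'M[R]_n) : (projmx M)^T = projmx M.
Proof.
rewrite /projmx; set B := row_base M; clearbody B.
by rewrite !trmx_mul !trmxK trmx_inv trmx_mul trmxK mulmxA.
Qed.

Lemma projmx_sub (M : 'M[R]_n) : (projmx M <= M)%MS.
Proof. by apply: submx_trans (submxMl _ _) _; rewrite eq_row_base. Qed.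

Lemma dotv_proj (M : 'M[R]_n) x v : (x <= M)%MS -> dotv x (proj M v) = dotv x v.
Proof. by move=> xM; rewrite /dotv /proj trmx_mul trmx_projmx mulmxA projmx_id. Qed.

Lemma exists_dotv_neq0 (s : seq 'rV[R]_n) :
  all (fun a => a != 0) s -> exists v, all (fun a => dotv v a != 0) s.
Proof.
elim: s => [|a s IH] /=; first by exists 0.
case/andP => a0 /IH[v vs].
(* [dotv (v + t *: a) b] vanishes for [t = - dotv v b / dotv a b] only,
   and [t] is chosen larger than all these values in absolute value. *)
pose t := 1 + \sum_(b <- a :: s) `|dotv v b / dotv a b|.
have t_gt0 : 0 < t by rewrite ltr_pwDl // sumr_ge0.
have good b : b \in a :: s -> (dotv a b != 0) || (dotv v b != 0) ->
    dotv (v + t *: a) b != 0.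
  move=> bs; rewrite dotvDl dotvZl; have [->|ab0] /= := eqVneq (dotv a b) 0.
    by rewrite mulr0 addr0.
  move=> _; apply/eqP => /addr0_eq vb.
  have /gtr0_norm tE : 0 < - dotv v b / dotv a b by rewrite vb mulfK.
  have : `|dotv v b / dotv a b| <= \sum_(c <- a :: s) `|dotv v c / dotv a c|.
    by rewrite (big_rem b) //= lerDl sumr_ge0.
  by rewrite -normrN -mulNr tE vb mulfK // /t; lra.
exists (v + t *: a); rewrite good ?mem_head ?dotvv_eq0 ?a0 //=.
by apply/allP => b bs; rewrite good ?(allP vs) ?orbT // in_cons bs orbT.
Qed.

Lemma exists_notin_subspaces (I : finType) (P : pred I) (X : I -> 'M[R]_n) :
  (forall i, P i -> \rank (X i) < n)%N -> exists v, forall i, P i -> ~~ (v <= X i)%MS.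
Proof.
move=> properX.
pose normal i (a : 'rV[R]_n) := P i -> (a <= kermx (X i)^T)%MS && (a != 0).
have [a aX] : exists a, forall i, normal i (a i).
  apply: fin_all_exists => i; rewrite /normal.
  have [Pi|] := boolP (P i); last by exists 0.
  have : kermx (X i)^T != 0.
    by rewrite -mxrank_eq0 mxrank_ker mxrank_tr subn_eq0 -ltnNge properX.
  by case/rowV0Pn => b bX b0; exists b => _; apply/andP.
have [|v va] := @exists_dotv_neq0 [seq a i | i <- enum P].
  by apply/allP => b /mapP[i]; rewrite mem_enum => /aX/andP[_ ai0] ->.
exists v => i Pi; apply/negP => vX; have /andP[aiX _] := aX i Pi.
have := allP va (a i) (map_f _ _); rewrite mem_enum (dotv_kermx_tr vX aiX) eqxx.
by move/(_ Pi).
Qed.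

End InnerProduct.

Section OrthonormalBasis.
Variables (R : realType) (n : nat) (e : 'I_n -> 'rV[R]_n).
Hypothesis e_orthonormal : orthonormal_basis e.
Implicit Types (u v w x y : 'rV[R]_n) (M N : 'M[R]_n) (S : {set 'I_n}).

Local Notation E := (\matrix_(i < n) e i).

Lemma basis_mx_orthogonal : E^T *m E = 1%:M.
Proof.
apply: mulmx1C; apply/matrixP => i j.
by rewrite !mxE -e_orthonormal dotvE; apply: eq_bigr => l _; rewrite !mxE.
Qed.

Lemma basis_expansion x : x = \sum_i dotv x (e i) *: e i.
Proof.
rewrite -{1}[x]mulmx1 -basis_mx_orthogonal mulmxA mulmx_sum_row.
apply: eq_bigr => i _; rewrite rowK !mxE dotvE.
by congr (_ *: _); apply: eq_bigr => j _; rewrite !mxE.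
Qed.

Lemma span_proj_basis N : (\matrix_(i < n) proj N (e i) == N)%MS.
Proof.
have -> : \matrix_(i < n) proj N (e i) = E *m projmx N.
  by apply/row_matrixP => i; rewrite rowK row_mul rowK.
rewrite (submx_trans (submxMl _ _) (projmx_sub N)) /=.
apply: submx_trans (submxMl (N *m E^T) _).
by rewrite mulmxA -(mulmxA N) basis_mx_orthogonal mulmx1 projmx_id.
Qed.

Definition span_basis S : 'M[R]_(#|S|, n) := \matrix_(j < #|S|) e (enum_val j).

Lemma basis_sub_span S i : i \in S -> (e i <= span_basis S)%MS.
Proof.
move=> iS; rewrite -(enum_rankK_in iS iS) -(rowK (fun j => e (enum_val j))).
exact: row_sub.
Qed.

Lemma supp_sub_span S u : supp e u \subset S -> (u <= span_basis S)%MS.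
Proof.
move=> /subsetP suppS; rewrite [u]basis_expansion; apply: summx_sub => i _.
have [iS|iS] := boolP (i \in S); first by rewrite scalemx_sub ?basis_sub_span.
have : i \notin supp e u by apply: contra iS; apply: suppS.
by rewrite inE negbK => /eqP->; rewrite scale0r sub0mx.
Qed.

Lemma supp_orth_span S y : (y <= kermx (span_basis S)^T)%MS -> [disjoint supp e y & S].
Proof.
move=> yK; rewrite disjoint_subset; apply/subsetP => i; rewrite !inE.
by apply: contra => iS; rewrite dotvC (dotv_kermx_tr (basis_sub_span iS) yK).
Qed.

Lemma disjoint_suppP u w :
  reflect (forall i, dotv u (e i) * dotv w (e i) = 0) [disjoint supp e u & supp e w].
Proof.
rewrite disjoint_subset; apply: (iffP subsetP) => [dj i|uw0 i].
  apply/eqP; rewrite mulf_eq0; have [ui|] := boolP (i \in supp e u).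
    by have := dj i ui; rewrite !inE negbK => ->; rewrite orbT.
  by rewrite inE negbK => ->.
rewrite !inE => ui; apply/negP => wi.
by have /eqP := uw0 i; rewrite mulf_eq0 (negbTE ui) (negbTE wi).
Qed.

Lemma card_disjoint_supp u w :
  [disjoint supp e u & supp e w] -> (#|supp e u| + #|supp e w| <= n)%N.
Proof.
rewrite -setI_eq0 => /eqP uw0; rewrite -cardsUI uw0 cards0 addn0.
by rewrite -[X in (_ <= X)%N]card_ord max_card.
Qed.

Definition supp_overlapping N := forall u w, (u <= N)%MS -> (w <= N)%MS ->
  [disjoint supp e u & supp e w] -> u = 0 \/ w = 0.

Lemma E_PR_supp_overlapping N : E_PR e N -> supp_overlapping N.
Proof.
case=> _ PR_N u w uN wN /disjoint_suppP uw0.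
have uwN := addmx_sub uN wN.
have u_wN : (u - w <= N)%MS by rewrite addmx_sub ?eqmx_opp.
have [|/addrI/eq_oppv_eq0|] := PR_N _ _ uwN u_wN; last 2 first.
- by right.
- by rewrite opprB addrC => /addrI/eq_oppv_eq0; left.
move=> i; rewrite !dotv_proj // !dotvDl dotvNl.
have /eqP := uw0 i; rewrite mulf_eq0 => /orP[]/eqP->.
  by rewrite !add0r normrN.
by rewrite oppr0 !addr0.
Qed.

Lemma supp_overlapping_E_PR N : supp_overlapping N -> E_PR e N.
Proof.
move=> ovN; split=> [|x y xN yN xy]; first exact: span_proj_basis.
have xyN := addmx_sub xN yN.
have x_yN : (x - y <= N)%MS by rewrite addmx_sub ?eqmx_opp.
have [|/eqP|/eqP] := ovN _ _ xyN x_yN.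
- apply/disjoint_suppP => i; apply/eqP.
  have /eqP := xy i; rewrite !dotv_proj // eqr_norm2.
  by rewrite !dotvDl dotvNl mulf_eq0 subr_eq0 addr_eq0 orbC.
- by rewrite addr_eq0 => /eqP; right.
- by rewrite subr_eq0 => /eqP; left.
Qed.

Lemma supp_overlapping_rank_le M x :
  supp_overlapping M -> (x <= M)%MS -> x != 0 -> (\rank M <= #|supp e x|)%N.
Proof.
move=> ovM xM x0; rewrite leqNgt; apply/negP => small_supp.
pose K := kermx (span_basis (supp e x))^T.
have : (M :&: K)%MS != 0.
  rewrite -mxrank_eq0 -lt0n; have := mxrank_sum_cap M K.
  have := rank_leq_col (M + K)%MS; have := rank_leq_row (span_basis (supp e x)).
  by rewrite mxrank_ker mxrank_tr; lia.
case/rowV0Pn => y yMK y0.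
have yM := submx_trans yMK (capmxSl _ _); have yK := submx_trans yMK (capmxSr _ _).
case: (ovM x y xM yM) => [|/eqP|/eqP]; rewrite ?(negbTE x0) ?(negbTE y0) //.
by rewrite disjoint_sym supp_orth_span.
Qed.

Lemma supp_overlapping_extend M :
  supp_overlapping M -> ((\rank M).*2 < n)%N ->
  (forall x, (x <= M)%MS -> x != 0 -> (\rank M < #|supp e x|)%N) ->
  exists2 N, supp_overlapping N & (M < N)%MS.
Proof.
move=> ovM small_rank large_supp; set k := \rank M in small_rank large_supp.
have [|v v_notin] := exists_notin_subspaces
    (P := fun A : {set 'I_n} => k + #|A| < n)%N (fun A => M + span_basis A)%MS.
  move=> A /=; apply: leq_ltn_trans.
  by rewrite (leq_trans (mxrank_adds_leqif _ _)) // leq_add2l rank_leq_row.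
have supp_outside u : (u <= M + v)%MS -> ~~ (u <= M)%MS -> (n <= k + #|supp e u|)%N.
  move=> uMv uM; rewrite leqNgt; apply/negP => small_supp.
  apply: (negP (v_notin _ small_supp)); apply: submx_trans (addsmx_exchange uMv uM) _.
  by rewrite addsmxS ?supp_sub_span.
exists (M + v)%MS; last first.
  rewrite ltmxE addsmxSl /=; apply: contra (v_notin set0 _) => [Mv_M|]; last first.
    by rewrite /= cards0 addn0; lia.
  exact: submx_trans (submx_trans (addsmxSr M v) Mv_M) (addsmxSl _ _).
move=> u w uN wN dj_uw; have card_uw := card_disjoint_supp dj_uw.
have [->|u0] := eqVneq u 0; first by left.
have [->|w0] := eqVneq w 0; first by right.
have [uM|uM] := boolP (u <= M)%MS; have [wM|wM] := boolP (w <= M)%MS.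
- exact: ovM.
- by have := large_supp u uM u0; have := supp_outside w wN wM; lia.
- by have := large_supp w wM w0; have := supp_outside u uN uM; lia.
- by have := supp_outside u uN uM; have := supp_outside w wN wM; lia.
Qed.

End OrthonormalBasis.

Theorem theorem4p6 (R : realType) (n : nat) (e : 'I_n -> 'rV[R]_n)
  (M : 'M[R]_n) (k : nat) :
  orthonormal_basis e ->
  \rank M = k ->
  maximal_E_PR e M ->
  (k < (n.+1)./2)%N ->
  (exists2 x : 'rV[R]_n, (x <= M)%MS /\ x != 0 & #|supp e x| = k) /\
  (forall x : 'rV[R]_n, (x <= M)%MS -> x != 0 -> (k <= #|supp e x|)%N).
Proof.
move=> e_orthonormal rkM [PR_M maxM] small_k.
have small_rank : ((\rank M).*2 < n)%N by rewrite rkM; lia.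
have ovM := E_PR_supp_overlapping PR_M.
have k_le_supp x : (x <= M)%MS -> x != 0 -> (k <= #|supp e x|)%N.
  by rewrite -rkM; apply: supp_overlapping_rank_le.
split=> //; apply: NNPP => no_min_supp.
have [|N ovN ltMN] := supp_overlapping_extend e_orthonormal ovM small_rank.
- move=> x xM x0; rewrite rkM ltn_neqAle k_le_supp // andbT.
  by apply/eqP => supp_k; apply: no_min_supp; exists x.
- exact: maxM N (supp_overlapping_E_PR e_orthonormal ovN) ltMN.
Qed.
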